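(* Let $R$ be a commutative ring with unit, let $G$ be a group, let $Z$ be a $G$-set, and let $\mathcal A=\bigoplus_{z\in Z}\mathcal A_z$ be an $R$-linear category with $G$-action $\alpha$ such that for every $g\in G$ and $z\in Z$, $\alpha_g$ restricts to an isomorphism $\alpha_g\colon\mathcal A_z\to\mathcal A_{gz}$. Then there is an equivalence of $R$-linear categories \[\mathcal A\rtimes G\simeq\bigoplus_{[z]\in G\backslash Z}\mathcal A_z\rtimes G_z,\] where $G_z$ denotes the stabilizer of $z$ (and $z$ runs over a set of representatives of the orbits).
   Context: An $R$-linear category is a category enriched over $R$-modules. $\bigoplus_{z}\mathcal A_z$ denotes the coproduct of $R$-linear categories: the disjoint union of the object sets, with zero morphisms between objects of different summands. A $G$-action is given by $R$-linear functors $\alpha_g$ with $\alpha_1=\mathrm{id}$, $\alpha_g\alpha_h=\alpha_{gh}$. The crossed product $\mathcal C\rtimes G$ has the objects of $\mathcal C$, morphisms $A\to B$ finite formal sums $\sum_g f_g g$ with $f_g\in\mathrm{Hom}(\alpha_g(A),B)$, and composition determined by $(fg)\circ(f'g')=(f\circ\alpha_g(f'))gg'$; $\mathcal A_z\rtimes G_z$ uses the restricted action of $G_z$ on $\mathcal A_z$. *)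

From HB Require Import structures.
From mathcomp Require Import all_boot all_order all_algebra.
From mathcomp Require Import boolp classical_sets cardinality fsbigop.

Set Implicit Arguments.
Unset Strict Implicit.
Unset Printing Implicit Defensive.
Import GRing.Theory.
Local Open Scope ring_scope.

Definition hcast {O : Type} (H : O -> O -> Type) {X X' Y Y' : O}
  (e1 : X = X') (e2 : Y = Y') (f : H X Y) : H X' Y' :=
  match e2 in _ = Y2 return H X' Y2 with
  | erefl => match e1 in _ = X2 return H X2 Y with erefl => f end end.

Definition scast {O : Type} (H : O -> O -> Type) {X X' Y : O}
  (e : X = X') (f : H X Y) : H X' Y :=
  match e in _ = X2 return H X2 Y with erefl => f end.

Arguments hcast {O} H {X X' Y Y'}.
Arguments scast {O} H {X X' Y}.

Lemma sig_Prop_eq (T : Type) (P : T -> Prop) (x y : {t | P t}) :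
  proj1_sig x = proj1_sig y -> x = y.
Proof.
case: x => x px; case: y => y py /= exy; subst y.
by rewrite (Prop_irrelevance px py).
Qed.

Record lincat (R : comPzRingType) := LinCat {
  lobj : Type;
  lhom : lobj -> lobj -> lmodType R;
  lcomp : forall X Y W, lhom Y W -> lhom X Y -> lhom X W;
  idm : forall X, lhom X X }.
Arguments lcomp {R} _ {X Y W}.
Arguments idm {R} _ X.
Arguments lhom {R} _.

Definition is_lincat (R : comPzRingType) (C : lincat R) : Prop :=
  [/\ (forall X Y W (g1 g2 : lhom C Y W) (f : lhom C X Y),
          lcomp C (g1 + g2) f = lcomp C g1 f + lcomp C g2 f),
      (forall X Y W (g : lhom C Y W) (f1 f2 : lhom C X Y),
          lcomp C g (f1 + f2) = lcomp C g f1 + lcomp C g f2),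
      (forall X Y W (a : R) (g : lhom C Y W) (f : lhom C X Y),
          lcomp C (a *: g) f = a *: lcomp C g f /\ lcomp C g (a *: f) = a *: lcomp C g f),
      (forall X Y W V (h : lhom C W V) (g : lhom C Y W) (f : lhom C X Y),
          lcomp C h (lcomp C g f) = lcomp C (lcomp C h g) f)
    & (forall X Y (f : lhom C X Y), lcomp C (idm C Y) f = f /\ lcomp C f (idm C X) = f)].

(* Raw data of an R-linear category whose hom-sets are given by their
   R-module operations (used for the constructed categories: crossed
   products and coproducts; an equivalence only refers to these data). *)
Record lcat (R : comPzRingType) := LCat {
  cobj : Type;
  chom : cobj -> cobj -> Type;
  czero : forall X Y, chom X Y;
  cadd : forall X Y, chom X Y -> chom X Y -> chom X Y;
  cscale : forall X Y, R -> chom X Y -> chom X Y;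
  ccomp : forall X Y W, chom Y W -> chom X Y -> chom X W;
  cid : forall X, chom X X }.
Arguments czero {R} _ {X Y}.
Arguments cadd {R} _ {X Y}.
Arguments cscale {R} _ {X Y}.
Arguments ccomp {R} _ {X Y W}.
Arguments cid {R} _ X.
Arguments chom {R} _.

Definition lcat_of (R : comPzRingType) (C : lincat R) : lcat R :=
  @LCat R (lobj C) (lhom C) (fun X Y => 0) (fun X Y f g => f + g)
    (fun X Y a f => a *: f) (fun X Y W => @lcomp R C X Y W) (idm C).

Definition lcat_equiv (R : comPzRingType) (C D : lcat R) : Prop :=
  exists (F : cobj C -> cobj D)
         (Fh : forall X Y, chom C X Y -> chom D (F X) (F Y)),
  [/\ (forall X Y (f g : chom C X Y), Fh X Y (cadd C f g) = cadd D (Fh X Y f) (Fh X Y g)),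
      (forall X Y (a : R) (f : chom C X Y), Fh X Y (cscale C a f) = cscale D a (Fh X Y f)),
      (forall X Y W (g : chom C Y W) (f : chom C X Y),
          Fh X W (ccomp C g f) = ccomp D (Fh Y W g) (Fh X Y f)),
      (forall X, Fh X X (cid C X) = cid D (F X))
    & (forall X Y, bijective (Fh X Y))] /\
    (forall Y : cobj D, exists X (u : chom D (F X) Y) (v : chom D Y (F X)),
          ccomp D u v = cid D Y /\ ccomp D v u = cid D (F X)).

(* A group acting: only its carrier, multiplication and unit are used. *)
Record grpdata := GrpData {
  gcar : choiceType;
  gmul : gcar -> gcar -> gcar;
  gone : gcar }.

Definition grpdata_of (G : groupType) : grpdata :=
  @GrpData G (fun g h => (g * h)%g) 1%g.

Record gset (G : groupType) := GSet {
  gpt : Type;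
  gact : G -> gpt -> gpt;
  gact1 : forall z, gact 1%g z = z;
  gactM : forall g h z, gact (g * h)%g z = gact g (gact h z) }.
Arguments gact {G} _.

Record lcaction (R : comPzRingType) (H : grpdata) (C : lincat R) := LCAction {
  aobj : gcar H -> lobj C -> lobj C;
  ahom : forall h X Y, lhom C X Y -> lhom C (aobj h X) (aobj h Y);
  aobj1 : forall X, aobj (gone H) X = X;
  aobjM : forall g h X, aobj (gmul g h) X = aobj g (aobj h X) }.
Arguments aobj {R H C} _.
Arguments ahom {R H C} _ h {X Y}.

Definition is_lcaction (R : comPzRingType) (H : grpdata) (C : lincat R)
  (a : lcaction H C) : Prop :=
  [/\ (forall h X Y (f g : lhom C X Y), ahom a h (f + g) = ahom a h f + ahom a h g),
      (forall h X Y (r : R) (f : lhom C X Y), ahom a h (r *: f) = r *: ahom a h f),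
      (forall h X Y W (g : lhom C Y W) (f : lhom C X Y),
          ahom a h (lcomp C g f) = lcomp C (ahom a h g) (ahom a h f))
    & (forall h X, ahom a h (idm C X) = idm C (aobj a h X))] /\
  (forall X Y (f : lhom C X Y),
          hcast (fun U V => (lhom C U V : Type)) (aobj1 a X) (aobj1 a Y) (ahom a (gone H) f) = f) /\
  (forall g h X Y (f : lhom C X Y),
          hcast (fun U V => (lhom C U V : Type)) (aobjM a g h X) (aobjM a g h Y) (ahom a (gmul g h) f)
          = ahom a g (ahom a h f)).

Section Crossed.
Variables (R : comPzRingType) (H : grpdata) (C : lincat R) (a : lcaction H C).
Local Open Scope classical_set_scope.

(* Morphisms X -> Y: finite formal sums  sum_h f_h h  with
   f_h : alpha_h(X) -> Y, i.e. finitely supported families. *)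
Definition cphom (X Y : lobj C) :=
  {f : forall h : gcar H, lhom C (aobj a h X) Y | finite_set [set h | f h != 0]}.

Lemma cp_zero_fin (X Y : lobj C) :
  finite_set [set h | (fun h : gcar H => (0 : lhom C (aobj a h X) Y)) h != 0].
Proof.
suff -> : [set h | (fun h : gcar H => (0 : lhom C (aobj a h X) Y)) h != 0] = set0.
  exact: finite_set0.
by apply/seteqP; split => h //=; rewrite eqxx.
Qed.

Definition cp_zero (X Y : lobj C) : cphom X Y :=
  exist _ (fun h => 0) (cp_zero_fin X Y).

(* packaging a family (all families built below are finitely supported) *)
Definition mkcp (X Y : lobj C) (f : forall h : gcar H, lhom C (aobj a h X) Y)
  : cphom X Y :=
  match pselect (finite_set [set h | f h != 0]) with
  | left p => exist _ f p
  | right _ => cp_zero X Y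
  end.

Definition cp_add X Y (f g : cphom X Y) : cphom X Y :=
  mkcp (fun h => proj1_sig f h + proj1_sig g h).

Definition cp_scale X Y (r : R) (f : cphom X Y) : cphom X Y :=
  mkcp (fun h => r *: proj1_sig f h).

(* identity = id_X . 1 *)
Definition cp_id X : cphom X X :=
  mkcp (fun h => match pselect (h = gone H) with
                 | left e => scast (fun U V => (lhom C U V : Type))
                     (esym (etrans (f_equal (fun k => aobj a k X) e) (aobj1 a X)))
                     (idm C X)
                 | right _ => 0 end).

(* composition, determined by (g k).(f h) = (g . alpha_k(f)) (k h) *)
Definition cp_term X Y W (g : cphom Y W) (f : cphom X Y) (m : gcar H)
  (p : gcar H * gcar H) : lhom C (aobj a m X) W :=
  match pselect (gmul p.1 p.2 = m) with
  | left e => scast (fun U V => (lhom C U V : Type))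
      (etrans (esym (aobjM a p.1 p.2 X)) (f_equal (fun k => aobj a k X) e))
      (lcomp C (proj1_sig g p.1) (ahom a p.1 (proj1_sig f p.2)))
  | right _ => 0 end.

Definition cp_comp X Y W (g : cphom Y W) (f : cphom X Y) : cphom X W :=
  mkcp (fun m => \sum_(p \in [set: gcar H * gcar H]) cp_term g f m p).

Definition crossed : lcat R :=
  @LCat R (lobj C) cphom cp_zero cp_add cp_scale cp_comp cp_id.

End Crossed.

Section Coprod.
Variables (R : comPzRingType) (I : Type) (C : I -> lcat R).

Definition tr (i j : I) (e : i = j) (X : cobj (C i)) : cobj (C j) :=
  match e in _ = k return cobj (C k) with erefl => X end.

Definition trhom (j k : I) (e : j = k) (X Y : cobj (C j))
  (f : chom (C j) X Y) : chom (C k) (tr e X) (tr e Y) :=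
  match e in _ = k' return chom (C k') (tr e X) (tr e Y) with
  | erefl => f end.

Lemma tr_id (i : I) (e : i = i) (X : cobj (C i)) : X = tr e X.
Proof. by rewrite (Prop_irrelevance e erefl). Qed.

Lemma tr_trans (i j k : I) (e1 : i = j) (e2 : j = k) (e : i = k)
  (X : cobj (C i)) : tr e2 (tr e1 X) = tr e X.
Proof.
subst j k; by rewrite (Prop_irrelevance e erefl).
Qed.

Definition cobj_sum := {i : I & cobj (C i)}.

(* no nonzero morphisms between objects of different summands *)
Definition chom_sum (A B : cobj_sum) :=
  forall e : projT1 A = projT1 B, chom (C (projT1 B)) (tr e (projT2 A)) (projT2 B).

Definition cs_zero A B : chom_sum A B := fun e => czero _.
Definition cs_add A B (f g : chom_sum A B) : chom_sum A B :=
  fun e => cadd _ (f e) (g e).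
Definition cs_scale A B (r : R) (f : chom_sum A B) : chom_sum A B :=
  fun e => cscale _ r (f e).
Definition cs_id A : chom_sum A A :=
  fun e => scast (chom (C (projT1 A))) (tr_id e (projT2 A)) (cid _ (projT2 A)).
Definition cs_comp A B D (g : chom_sum B D) (f : chom_sum A B) : chom_sum A D :=
  fun e => match pselect (projT1 A = projT1 B) with
  | left e1 =>
      let e2 := etrans (esym e1) e in
      scast (chom (C (projT1 D))) (tr_trans e1 e2 e (projT2 A))
        (ccomp _ (g e2) (trhom e2 (f e1)))
  | right _ => czero _ end.

Definition coprod : lcat R :=
  @LCat R cobj_sum chom_sum cs_zero cs_add cs_scale cs_comp cs_id.

End Coprod.

Definition fullsub (R : comPzRingType) (C : lincat R) (P : lobj C -> Prop)
  : lincat R :=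
  @LinCat R {X : lobj C | P X} (fun X Y => lhom C (proj1_sig X) (proj1_sig Y))
    (fun X Y W g f => lcomp C g f) (fun X => idm C (proj1_sig X)).

Section Stab.
Variables (G : groupType) (Z : gset G) (z : gpt Z).

Definition stabT := {g : G | gact Z g z = z}.
HB.instance Definition _ := gen_eqMixin stabT.
HB.instance Definition _ := gen_choiceMixin stabT.

Lemma stab_mul_proof (g h : stabT) :
  gact Z (proj1_sig g * proj1_sig h)%g z = z.
Proof. by rewrite gactM (proj2_sig h) (proj2_sig g). Qed.

Definition stab : grpdata :=
  @GrpData stabT (fun g h => exist _ _ (stab_mul_proof g h))
    (exist _ 1%g (gact1 z)).
End Stab.
Arguments stab {G} Z z.

Section Restrict.
Variables (R : comPzRingType) (G : groupType) (Z : gset G) (A : lincat R)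
  (a : lcaction (grpdata_of G) A) (deg : lobj A -> gpt Z)
  (hdeg : forall g X, deg (aobj a g X) = gact Z g (deg X)) (z : gpt Z).

Definition summand : lincat R := fullsub (fun X : lobj A => deg X = z).

Definition raobj (h : gcar (stab Z z)) (X : lobj summand) : lobj summand :=
  exist _ (aobj a (proj1_sig h) (proj1_sig X))
    (etrans (hdeg (proj1_sig h) (proj1_sig X))
       (etrans (f_equal (gact Z (proj1_sig h)) (proj2_sig X)) (proj2_sig h))).

Definition rahom (h : gcar (stab Z z)) (X Y : lobj summand)
  (f : lhom summand X Y) : lhom summand (raobj h X) (raobj h Y) :=
  ahom a (proj1_sig h) f.

Lemma raobj1 X : raobj (gone (stab Z z)) X = X.
Proof. by apply: sig_Prop_eq; rewrite /= (aobj1 a). Qed.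

Lemma raobjM g h X : raobj (gmul g h) X = raobj g (raobj h X).
Proof. by apply: sig_Prop_eq; rewrite /= (aobjM a). Qed.

Definition restr_action : lcaction (stab Z z) summand :=
  @LCAction R (stab Z z) summand raobj rahom raobj1 raobjM.
End Restrict.

From Pilot Require Import Defs.
From HB Require Import structures.
From mathcomp Require Import all_boot all_order all_algebra.
From mathcomp Require Import boolp classical_sets cardinality fsbigop.

Set Implicit Arguments.
Unset Strict Implicit.
Unset Printing Implicit Defensive.
Import GRing.Theory.
Local Open Scope ring_scope.
Local Open Scope classical_set_scope.

(* Send X to alpha_(g_X) X in A_r, where r is the chosen representative of the
   orbit of deg X and g_X deg X = r, and send a morphism sum_h f_h h : X -> Y to
   sum_k alpha_(g_Y) (f_(g_Y^-1 k g_X)) k with k ranging over G_r.  Morphisms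
   between objects of different degrees vanish, so f_h = 0 unless g_Y h g_X^-1
   fixes r: this is a bijection on hom-sets, compatible with composition since
   the conjugations by g_Y in the middle cancel.  Each object U of A_r is
   isomorphic in A_r x| G_r to alpha_g U for every g in G_r (via 1.g and
   1.g^-1), which gives essential surjectivity. *)

(** * Morphisms up to transport *)

Section PackedHom.
Variables (R : comPzRingType) (C : lincat R).

(* A morphism together with its endpoints: morphisms whose endpoints are only
   propositionally equal become comparable without transport. *)
Definition pack (X Y : lobj C) (f : lhom C X Y) :
  {XY : lobj C * lobj C & lhom C XY.1 XY.2} := existT _ (X, Y) f.

Lemma pack_inj X Y (f f' : lhom C X Y) : pack f = pack f' -> f = f'.
Proof.
move=> h; have := projT2_eq h.
by rewrite (Prop_irrelevance (projT1_eq h) erefl).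
Qed.

Lemma pack_ends X Y X' Y' (f : lhom C X Y) (f' : lhom C X' Y') :
  pack f = pack f' -> X = X' /\ Y = Y'.
Proof. by move=> h; have := congr1 (@projT1 _ _) h; case=> -> ->. Qed.

Lemma pack_hcast X X' Y Y' (e1 : X = X') (e2 : Y = Y') (f : lhom C X Y) :
  pack (hcast (fun U V => (lhom C U V : Type)) e1 e2 f) = pack f.
Proof. by case: X' / e1; case: Y' / e2. Qed.

Lemma pack_scast X X' Y (e : X = X') (f : lhom C X Y) :
  pack (scast (fun U V => (lhom C U V : Type)) e f) = pack f.
Proof. by case: X' / e. Qed.

Lemma pack_congr (T : Type) (O1 O2 : T -> lobj C)
  (F : forall t, lhom C (O1 t) (O2 t)) t t' : t = t' -> pack (F t) = pack (F t').
Proof. by move=> ->. Qed.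

Lemma pack_comp X Y W X' Y' W' (g : lhom C Y W) (f : lhom C X Y)
  (g' : lhom C Y' W') (f' : lhom C X' Y') :
  pack g = pack g' -> pack f = pack f' -> pack (lcomp C g f) = pack (lcomp C g' f').
Proof.
move=> hg hf; have [eY eW] := pack_ends hg; have [eX _] := pack_ends hf.
by subst Y' W' X'; rewrite (pack_inj hg) (pack_inj hf).
Qed.

Lemma pack_add X Y X' Y' (f g : lhom C X Y) (f' g' : lhom C X' Y') :
  pack f = pack f' -> pack g = pack g' -> pack (f + g) = pack (f' + g').
Proof.
move=> hf hg; have [eX eY] := pack_ends hf; subst X' Y'.
by rewrite (pack_inj hf) (pack_inj hg).
Qed.

Lemma pack_scale X Y X' Y' (r : R) (f : lhom C X Y) (f' : lhom C X' Y') :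
  pack f = pack f' -> pack (r *: f) = pack (r *: f').
Proof. by move=> hf; have [eX eY] := pack_ends hf; subst X' Y'; rewrite (pack_inj hf). Qed.

Lemma hcast0 X X' Y Y' (e1 : X = X') (e2 : Y = Y') :
  hcast (fun U V => (lhom C U V : Type)) e1 e2 (0 : lhom C X Y) = 0.
Proof. by case: X' / e1; case: Y' / e2. Qed.

Lemma hcastD X X' Y Y' (e1 : X = X') (e2 : Y = Y') (f g : lhom C X Y) :
  hcast (fun U V => (lhom C U V : Type)) e1 e2 (f + g) =
  hcast (fun U V => (lhom C U V : Type)) e1 e2 f +
  hcast (fun U V => (lhom C U V : Type)) e1 e2 g.
Proof. by case: X' / e1; case: Y' / e2. Qed.

End PackedHom.

Section LinCat.
Variables (R : comPzRingType) (C : lincat R).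
Hypothesis hC : is_lincat C.

Lemma lcomp0f X Y W (f : lhom C X Y) : lcomp C (0 : lhom C Y W) f = 0.
Proof. case: hC => hD _ _ _ _; apply: (@addrI _ (lcomp C 0 f)); by rewrite -hD !addr0. Qed.

Lemma lcompf0 X Y W (g : lhom C Y W) : lcomp C g (0 : lhom C X Y) = 0.
Proof. case: hC => _ hD _ _ _; apply: (@addrI _ (lcomp C g 0)); by rewrite -hD !addr0. Qed.

Lemma is_lincat_fullsub (P : lobj C -> Prop) : is_lincat (fullsub P).
Proof.
by case: hC => hDl hDr hZ hA hid; split=> *;
  [apply: hDl | apply: hDr | apply: hZ | apply: hA | apply: hid].
Qed.

End LinCat.

Section Action.
Variables (R : comPzRingType) (H : grpdata) (C : lincat R) (a : lcaction H C).
Hypothesis ha : is_lcaction a.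

Lemma ahom0 h X Y : ahom a h (0 : lhom C X Y) = 0.
Proof.
case: ha => [[hD _ _ _] _]; apply: (@addrI _ (ahom a h (0 : lhom C X Y))).
by rewrite -hD !addr0.
Qed.

Lemma pack_ahom h X Y X' Y' (f : lhom C X Y) (f' : lhom C X' Y') :
  pack f = pack f' -> pack (ahom a h f) = pack (ahom a h f').
Proof. by move=> hf; have [eX eY] := pack_ends hf; subst X' Y'; rewrite (pack_inj hf). Qed.

Lemma pack_ahom1 X Y (f : lhom C X Y) : pack (ahom a (gone H) f) = pack f.
Proof. by case: ha => _ [h1 _]; rewrite -{2}(h1 _ _ f) pack_hcast. Qed.

Lemma pack_ahomM g h X Y (f : lhom C X Y) :
  pack (ahom a (gmul g h) f) = pack (ahom a g (ahom a h f)).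
Proof. by case: ha => _ [_ hM]; rewrite -(hM _ _ _ _ f) pack_hcast. Qed.

End Action.

Lemma scast_id (O : Type) (T : O -> O -> Type) (U V : O) (e : U = U) (f : T U V) :
  scast T e f = f.
Proof. by rewrite (Prop_irrelevance e erefl). Qed.

(** * Crossed products *)

Section CrossedProduct.
Variables (R : comPzRingType) (H : grpdata) (C : lincat R) (a : lcaction H C).
Hypothesis hC : is_lincat C.
Hypothesis act0 : forall h X Y, ahom a h (0 : lhom C X Y) = 0.

Local Notation HC := (fun U V => (lhom C U V : Type)).

Lemma mkcpE X Y (f : forall h, lhom C (aobj a h X) Y) :
  finite_set [set h | f h != 0] -> proj1_sig (mkcp f) = f.
Proof. by move=> fin; rewrite /mkcp; case: pselect. Qed.

Lemma cphom_ext X Y (f g : cphom a X Y) :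
  (forall h, proj1_sig f h = proj1_sig g h) -> f = g.
Proof. by move=> h; apply: sig_Prop_eq; exact: functional_extensionality_dep. Qed.

Lemma cp_addE X Y (f g : cphom a X Y) h :
  proj1_sig (cp_add f g) h = proj1_sig f h + proj1_sig g h.
Proof.
rewrite /cp_add mkcpE //.
apply: (sub_finite_set (B := [set h | proj1_sig f h != 0] `|` [set h | proj1_sig g h != 0])).
  move=> k /=; case: (eqVneq (proj1_sig f k) 0) => [->|]; last by left.
  by rewrite add0r => ?; right.
by rewrite finite_setU; split; [exact: (proj2_sig f)|exact: (proj2_sig g)].
Qed.

Lemma cp_scaleE X Y r (f : cphom a X Y) h :
  proj1_sig (cp_scale r f) h = r *: proj1_sig f h.
Proof.
rewrite /cp_scale mkcpE //.
apply: (sub_finite_set (B := [set h | proj1_sig f h != 0])); last exact: (proj2_sig f).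
by move=> k /=; apply: contraNN => /eqP ->; rewrite scaler0.
Qed.

Lemma cp_term_neq0 X Y W (g : cphom a Y W) (f : cphom a X Y) m p :
  cp_term g f m p != 0 ->
  [/\ gmul p.1 p.2 = m, proj1_sig g p.1 != 0 & proj1_sig f p.2 != 0].
Proof.
rewrite /cp_term; case: pselect => [e|]; last by rewrite eqxx.
case: (eqVneq (proj1_sig g p.1) 0) => [->|g0].
  by rewrite (lcomp0f hC); case: _ / (etrans _ _); rewrite eqxx.
case: (eqVneq (proj1_sig f p.2) 0) => [->|//].
by rewrite act0 (lcompf0 hC); case: _ / (etrans _ _); rewrite eqxx.
Qed.

Lemma cp_term_off X Y W (g : cphom a Y W) (f : cphom a X Y) m p :
  gmul p.1 p.2 <> m -> cp_term g f m p = 0.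
Proof. by rewrite /cp_term; case: pselect. Qed.

Lemma pack_cp_term X Y W (g : cphom a Y W) (f : cphom a X Y) m p :
  gmul p.1 p.2 = m ->
  pack (cp_term g f m p) = pack (lcomp C (proj1_sig g p.1) (ahom a p.1 (proj1_sig f p.2))).
Proof. by move=> e; rewrite /cp_term; case: pselect => // e'; rewrite pack_scast. Qed.

Lemma cp_term_support X Y W (g : cphom a Y W) (f : cphom a X Y) m :
  finite_set ([set: gcar H * gcar H] `&` cp_term g f m @^-1` [set~ 0]).
Proof.
apply: (sub_finite_set (B := [set h | proj1_sig g h != 0] `*` [set h | proj1_sig f h != 0])).
  by move=> p [_ /= /eqP/cp_term_neq0 [_ g0 f0]].
by apply: finite_setX; [exact: (proj2_sig g)|exact: (proj2_sig f)].
Qed.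

Lemma cp_compE X Y W (g : cphom a Y W) (f : cphom a X Y) m :
  proj1_sig (cp_comp g f) m = \sum_(p \in [set: gcar H * gcar H]) cp_term g f m p.
Proof.
rewrite /cp_comp mkcpE //.
pose Sg := [set h | proj1_sig g h != 0]; pose Sf := [set h | proj1_sig f h != 0].
apply: (sub_finite_set (B := [set gmul p.1 p.2 | p in Sg `*` Sf])); last first.
  by apply: finite_image; apply: finite_setX; [exact: (proj2_sig g)|exact: (proj2_sig f)].
move=> k /= hk.
case: (pselect (exists p, cp_term g f k p != 0)) => [[p /cp_term_neq0 [e g0 f0]]|np].
  by exists p.
move: hk; rewrite fsbig1 ?eqxx // => p _.
by apply/eqP; apply: contrapT => hp; apply: np; exists p; apply/negP.
Qed.

Lemma cp_comp0r X Y W (g : cphom a Y W) : cp_comp g (cp_zero a X Y) = cp_zero a X W.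
Proof.
apply: cphom_ext => m; rewrite cp_compE fsbig1 // => p _.
by apply/eqP; apply: contraT => /cp_term_neq0 [_ _]; rewrite eqxx.
Qed.

Lemma finite_support1 X Y (f : forall h, lhom C (aobj a h X) Y) s :
  (forall h, h <> s -> f h = 0) -> finite_set [set h | f h != 0].
Proof.
move=> fs; apply: (sub_finite_set (B := [set s])); last exact: finite_set1.
by move=> h /= nz; apply: contrapT => ne; move: nz; rewrite fs ?eqxx.
Qed.

Lemma pack_cp_id1 X : pack (proj1_sig (cp_id a X) (gone H)) = pack (idm C X).
Proof.
rewrite /cp_id mkcpE; last by apply: (finite_support1 (s := gone H)) => h; case: pselect.
by case: pselect => // e; rewrite pack_scast.
Qed.

Lemma cp_id_neq1 X h : h <> gone H -> proj1_sig (cp_id a X) h = 0.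
Proof.
move=> nh; rewrite /cp_id mkcpE; first by case: pselect.
by apply: (finite_support1 (s := gone H)) => k; case: pselect.
Qed.

Definition cp_single_fam X Y (s : gcar H) (f : lhom C (aobj a s X) Y) h : lhom C (aobj a h X) Y :=
  match pselect (h = s) with
  | left e => scast HC (f_equal (fun k => aobj a k X) (esym e)) f
  | right _ => 0 end.

Lemma cp_single_support X Y s (f : lhom C (aobj a s X) Y) :
  finite_set [set h | cp_single_fam f h != 0].
Proof. by apply: (finite_support1 (s := s)) => h; rewrite /cp_single_fam; case: pselect. Qed.

Definition cp_single X Y s (f : lhom C (aobj a s X) Y) : cphom a X Y := mkcp (cp_single_fam f).

Lemma pack_cp_single X Y s (f : lhom C (aobj a s X) Y) :
  pack (proj1_sig (cp_single f) s) = pack f.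
Proof.
rewrite /cp_single mkcpE; last exact: cp_single_support.
by rewrite /cp_single_fam; case: pselect => // e; rewrite pack_scast.
Qed.

Lemma cp_single_neq X Y s (f : lhom C (aobj a s X) Y) h :
  h <> s -> proj1_sig (cp_single f) h = 0.
Proof.
move=> nh; rewrite /cp_single mkcpE; last exact: cp_single_support.
by rewrite /cp_single_fam; case: pselect.
Qed.

Lemma cp_comp_single X Y W s t (g : lhom C (aobj a s Y) W) (f : lhom C (aobj a t X) Y) m :
  proj1_sig (cp_comp (cp_single g) (cp_single f)) m =
  cp_term (cp_single g) (cp_single f) m (s, t).
Proof.
have gs := @cp_single_neq _ _ s g; have ft := @cp_single_neq _ _ t f.
rewrite cp_compE.
rewrite -(fsbig_widen [set (s, t)] [set: gcar H * gcar H]) ?fsbig_set1 //.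
move=> [p1 p2] [_ /= np]; apply/eqP; apply: contrapT => /negP/cp_term_neq0 [_ g0 f0].
apply: np; congr pair.
  by apply: contrapT => ne; move: g0; rewrite gs ?eqxx.
by apply: contrapT => ne; move: f0; rewrite ft ?eqxx.
Qed.

Section Shift.
Hypothesis act_idm : forall h X, ahom a h (idm C X) = idm C (aobj a h X).
Variables (s t : gcar H) (X : lobj C).
Hypotheses (hts : gmul t s = gone H) (hst : gmul s t = gone H).

Lemma aobjK : aobj a t (aobj a s X) = X.
Proof. by rewrite -aobjM hts aobj1. Qed.

Definition cp_shift : cphom a X (aobj a s X) := cp_single (idm C (aobj a s X)).

Definition cp_unshift : cphom a (aobj a s X) X :=
  cp_single (s := t) (scast HC (esym aobjK) (idm C X)).

Lemma cp_unshiftK : cp_comp cp_unshift cp_shift = cp_id a X.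
Proof.
apply: cphom_ext => k; rewrite cp_comp_single.
case: (pselect (k = gone H)) => [->|nk]; last by rewrite cp_term_off ?cp_id_neq1 //= hts => /esym.
apply: pack_inj; rewrite pack_cp_term // pack_cp_id1.
rewrite (pack_comp (pack_cp_single _) (pack_ahom a t (pack_cp_single _))) act_idm.
by case: hC => _ _ _ _ hid; rewrite (hid _ _ _).2 pack_scast.
Qed.

Lemma cp_shiftK : cp_comp cp_shift cp_unshift = cp_id a (aobj a s X).
Proof.
apply: cphom_ext => k; rewrite cp_comp_single.
case: (pselect (k = gone H)) => [->|nk]; last by rewrite cp_term_off ?cp_id_neq1 //= hst => /esym.
apply: pack_inj; rewrite pack_cp_term // pack_cp_id1.
rewrite (pack_comp (pack_cp_single _) (pack_ahom a s (pack_cp_single _))).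
by case: hC => _ _ _ _ hid; rewrite (hid _ _ _).1 (pack_ahom a s (pack_scast _ _)) act_idm.
Qed.

End Shift.

End CrossedProduct.

Section CoproductSummand.
Variables (R : comPzRingType) (I : Type) (C : I -> lcat R).

Definition cs_in (i : I) (U V : cobj (C i)) (f : chom (C i) U V) :
  chom (coprod C) (existT _ i U) (existT _ i V) :=
  fun e => scast (chom (C i)) (tr_id e U) f.

Lemma cs_comp_in (i : I) (U1 U2 U3 : cobj (C i))
  (g : chom (C i) U2 U3) (f : chom (C i) U1 U2) :
  ccomp (coprod C) (cs_in g) (cs_in f) = cs_in (ccomp (C i) g f).
Proof.
apply: functional_extensionality_dep => e.
rewrite /ccomp /= /cs_comp /=; case: pselect => [e1|ne]; last by exfalso; apply: ne.
rewrite (Prop_irrelevance e1 erefl) (Prop_irrelevance e erefl) /=.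
by rewrite /cs_in !scast_id.
Qed.

End CoproductSummand.

(** * Conjugating morphisms into a stabilizer *)

Lemma fsbig_morph (T : choiceType) (U V : zmodType) (phi : U -> V) (P : set T)
  (F : T -> U) : phi 0 = 0 -> {morph phi : x y / x + y} ->
  finite_set (P `&` F @^-1` [set~ 0]) ->
  phi (\sum_(i \in P) F i) = \sum_(i \in P) phi (F i).
Proof.
move=> h0 hD fin.
have rP : forall i, i \in finite_support 0 P F -> P i.
  by move=> i; rewrite (in_finite_support fin) => /set_mem [].
have c1 : forall i, P i -> i \notin finite_support 0 P F -> phi (F i) = 0.
  move=> i Pi; rewrite (in_finite_support fin) => /negP ni.
  have -> : F i = 0 by apply: contrapT => nz; apply: ni; apply: mem_set; split.
  exact: h0.
have c2 : [set` finite_support 0 P F] `<=` P by move=> i /= /rP.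
rewrite [RHS](fsbigE (finite_support 0 P F) _ _ c2 c1) //.
rewrite (big_morph phi hD h0) [RHS]big_seq_cond big_seq.
apply: eq_bigl => i; case: (boolP (i \in _)) => //= /rP Pi.
by rewrite mem_set.
Qed.

Section Sandwich.
Variable G : groupType.
Implicit Types g h l x y : G.

Lemma sandwich_inj g h : injective (fun x => g^-1 * x * h)%g.
Proof. by move=> x y; rewrite -!mulgA => /mulgI /mulIg. Qed.

Lemma sandwichK g h x : (g^-1 * (g * x * h^-1) * h)%g = x.
Proof. by rewrite !mulgA mulVg mul1g -mulgA mulVg mulg1. Qed.

Lemma sandwichKV g h x : (g * (g^-1 * x * h) * h^-1)%g = x.
Proof. by rewrite !mulgA mulgV mul1g -mulgA mulgV mulg1. Qed.

Lemma sandwichM g h l x y : ((g^-1 * x * h) * (h^-1 * y * l))%g = (g^-1 * (x * y) * l)%g.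
Proof. by rewrite !mulgA -(mulgA _ h) mulgV mulg1. Qed.

End Sandwich.

Section OrbitDecomposition.
Variables (R : comPzRingType) (G : groupType) (Z : gset G)
  (A : lincat R) (a : lcaction (grpdata_of G) A) (deg : lobj A -> gpt Z).
Hypotheses (hA : is_lincat A) (ha : is_lcaction a)
  (hsum : forall (X Y : lobj A) (f : lhom A X Y), deg X <> deg Y -> f = 0)
  (hdeg : forall (g : G) (X : lobj A), deg (aobj a g X) = gact Z g (deg X)).

Local Notation ob g X := (aobj a (g : G) X).
Local Notation act g f := (ahom a (g : G) f).
Local Notation Hom X Y := (lhom A X Y).
Local Notation HC := (fun U V => (lhom A U V : Type)).
Local Notation Ar r := (restr_action hdeg r).

Lemma deg_eq_of_neq0 X Y (f : Hom X Y) : f != 0 -> deg X = deg Y.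
Proof. by move=> nz; apply: contrapT => nd; move: nz; rewrite (hsum f nd) eqxx. Qed.

Lemma stab_of_deg X Y (gx gy h : G) r :
  gact Z gx (deg X) = r -> gact Z gy (deg Y) = r -> deg (ob h X) = deg Y ->
  gact Z (gy * h * gx^-1)%g r = r.
Proof. by move=> hx hy ed; rewrite -{1}hx -gactM mulgVK gactM -hdeg ed hy. Qed.

Lemma deg_of_summand r X (g : G) (U : {X | deg X = r}) :
  sval U = ob g X -> gact Z g (deg X) = r.
Proof. by move=> eU; rewrite -hdeg -eU (proj2_sig U). Qed.

Lemma pack_summand r (U V U' V' : {X | deg X = r})
  (f : lhom (summand deg r) U V) (f' : lhom (summand deg r) U' V') :
  pack f = pack f' -> @pack _ A (sval U) (sval V) f = @pack _ A (sval U') (sval V') f'.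
Proof. by move=> h; have [eU eV] := pack_ends h; subst U' V'; rewrite (pack_inj h). Qed.

Lemma summand_lincat r : is_lincat (summand deg r).
Proof. exact: is_lincat_fullsub. Qed.

Lemma restr_ahom0 r h X Y : ahom (Ar r) h (0 : lhom (summand deg r) X Y) = 0.
Proof. exact: (ahom0 ha). Qed.

Lemma hcast_ahom_sum (T : choiceType) (P : set T) (g : G) X Y X' Y'
  (e1 : ob g X = X') (e2 : ob g Y = Y') (F : T -> Hom X Y) :
  finite_set (P `&` F @^-1` [set~ 0]) ->
  hcast HC e1 e2 (act g (\sum_(p \in P) F p)) = \sum_(p \in P) hcast HC e1 e2 (act g (F p)).
Proof.
move=> fin; apply: (fsbig_morph (phi := fun x => hcast HC e1 e2 (act g x))) => //.
  by rewrite (ahom0 ha) hcast0.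
by move=> x y /=; case: ha => [[hD _ _ _] _]; rewrite hD hcastD.
Qed.

Lemma conj_hom_obj r X (gx gy : G) (U : {X | deg X = r}) (k : @stabT G Z r) :
  sval U = ob gx X -> ob gy (ob (gy^-1 * sval k * gx)%g X) = ob (sval k) (sval U).
Proof. by move=> ->; rewrite -(aobjM a gy) -(aobjM a (sval k)) /= !mulgA mulgV mul1g. Qed.

(* For U = alpha_gx X and V = alpha_gy Y in A_r: the G_r-components of
   gy . f . gx^-1, i.e. k |-> alpha_gy (f_(gy^-1 k gx)). *)
Definition conj_hom r X Y (gx gy : G) (U V : {X | deg X = r})
  (eU : sval U = ob gx X) (eV : sval V = ob gy Y) (f : cphom a X Y) : cphom (Ar r) U V :=
  mkcp (a := Ar r) (X := U) (Y := V) (fun k : @stabT G Z r =>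
    hcast HC (conj_hom_obj gy k eU) (esym eV) (act gy (proj1_sig f (gy^-1 * sval k * gx)%g))).

Section Conj.
Variables (r : gpt Z) (X Y : lobj A) (gx gy : G) (U V : {X | deg X = r}).
Variables (eU : sval U = ob gx X) (eV : sval V = ob gy Y).

Lemma conj_homE f k : proj1_sig (conj_hom eU eV f) k =
  hcast HC (conj_hom_obj gy k eU) (esym eV) (act gy (proj1_sig f (gy^-1 * sval k * gx)%g)).
Proof.
rewrite /conj_hom mkcpE //.
apply: (sub_finite_set (B := (fun k : @stabT G Z r => (gy^-1 * sval k * gx)%g) @^-1`
                              [set h | proj1_sig f h != 0])).
  by move=> k' /=; apply: contraNN => /eqP ->; rewrite (ahom0 ha) hcast0.
apply: finite_preimage; last exact: (proj2_sig f).
by move=> k1 k2 _ _ /sandwich_inj e; apply: sig_Prop_eq.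
Qed.

Lemma pack_conj_hom f k : pack (proj1_sig (conj_hom eU eV f) k : Hom _ _) =
  pack (act gy (proj1_sig f (gy^-1 * sval k * gx)%g)).
Proof. by rewrite conj_homE pack_hcast. Qed.

Lemma conj_homD f g : conj_hom eU eV (cp_add f g) = cp_add (conj_hom eU eV f) (conj_hom eU eV g).
Proof.
apply: cphom_ext => k; rewrite cp_addE !conj_homE cp_addE; apply: (@pack_inj _ A).
case: ha => [[hD _ _ _] _]; rewrite pack_hcast hD.
by apply: pack_add; rewrite pack_hcast.
Qed.

Lemma conj_homZ c f : conj_hom eU eV (cp_scale c f) = cp_scale c (conj_hom eU eV f).
Proof.
apply: cphom_ext => k; rewrite cp_scaleE !conj_homE cp_scaleE; apply: (@pack_inj _ A).
case: ha => [[_ hZ _ _] _]; rewrite pack_hcast hZ.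
by apply: pack_scale; rewrite pack_hcast.
Qed.

End Conj.

Lemma conj_hom_id r X (gx : G) (U : {X | deg X = r}) (eU eU' : sval U = ob gx X) :
  conj_hom eU eU' (cp_id a X) = cp_id (Ar r) U.
Proof.
apply: cphom_ext => k; rewrite conj_homE.
case: (pselect (k = gone (stab Z r))) => [->|nk].
  apply: (@pack_inj _ A); rewrite pack_hcast (pack_summand (pack_cp_id1 _ _)) /= eU.
  case: ha => [[_ _ _ h1] _]; rewrite -h1; apply: pack_ahom.
  have e1 : (gx^-1 * sval (gone (stab Z r)) * gx)%g = gone (grpdata_of G).
    by rewrite /= mulg1 mulVg.
  by rewrite (pack_congr (proj1_sig (cp_id a X)) e1) pack_cp_id1.
rewrite cp_id_neq1 ?(ahom0 ha) ?hcast0 ?cp_id_neq1 // => e1; apply: nk.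
by apply: sig_Prop_eq => /=; rewrite -(sandwichKV gx gx (sval k)) e1 /= mulg1 mulgV.
Qed.

Section ConjComp.
Variables (r : gpt Z) (X Y W : lobj A) (gx gy gw : G) (U V T : {X | deg X = r}).
Variables (eU : sval U = ob gx X) (eV : sval V = ob gy Y) (eT : sval T = ob gw W).

Definition stab_lift (q : @stabT G Z r * @stabT G Z r) : G * G :=
  ((gw^-1 * sval q.1 * gy)%g, (gy^-1 * sval q.2 * gx)%g).

Lemma stab_lift_inj : injective stab_lift.
Proof.
by move=> [q1 q2] [q3 q4] [/sandwich_inj/sig_Prop_eq -> /sandwich_inj/sig_Prop_eq ->].
Qed.

(* A nonzero term g_p1 alpha_p1(f_p2) forces both factors to preserve degrees,
   which puts the conjugates of p1 and p2 in the stabilizer of r. *)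
Lemma cp_term_off_stab (g : cphom a Y W) (f : cphom a X Y) m p :
  ~ (stab_lift @` setT) p -> cp_term g f m p = 0.
Proof.
move=> np; apply/eqP; apply: contrapT => /negP.
case/(cp_term_neq0 hA (ahom0 ha)) => _ g0 f0; apply: np.
have s1 := stab_of_deg (deg_of_summand eV) (deg_of_summand eT) (deg_eq_of_neq0 g0).
have s2 := stab_of_deg (deg_of_summand eU) (deg_of_summand eV) (deg_eq_of_neq0 f0).
exists (exist (fun h : G => gact Z h r = r) _ s1, exist (fun h : G => gact Z h r = r) _ s2) => //.
by rewrite /stab_lift /= !sandwichK; case: p {g0 f0 s1 s2}.
Qed.

Lemma cp_term_conj (g : cphom a Y W) (f : cphom a X Y) k q :
  hcast HC (conj_hom_obj gw k eU) (esym eT)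
    (act gw (cp_term g f (gw^-1 * sval k * gx)%g (stab_lift q))) =
  cp_term (conj_hom eV eT g) (conj_hom eU eV f) k q.
Proof.
case: (pselect (@gmul (stab Z r) q.1 q.2 = k)) => [c2|n2].
  have c1 : @gmul (grpdata_of G) (stab_lift q).1 (stab_lift q).2 = (gw^-1 * sval k * gx)%g.
    by rewrite /= sandwichM -c2.
  apply: (@pack_inj _ A); rewrite pack_hcast (pack_ahom a _ (pack_cp_term _ _ c1)).
  case: ha => [[_ _ hM _] _]; rewrite hM.
  rewrite (pack_summand (pack_cp_term (conj_hom eV eT g) (conj_hom eU eV f) c2)).
  symmetry; apply: pack_comp; first by rewrite pack_conj_hom.
  rewrite (pack_ahom a _ (pack_conj_hom _ _ _ _)) -!(pack_ahomM ha).
  apply: (pack_congr (fun h : G => act h (proj1_sig f (gy^-1 * sval q.2 * gx)%g))).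
  by rewrite /= !mulgA mulgV mul1g.
rewrite /cp_term; case: pselect => [c1|_]; last first.
  by case: pselect => // _; rewrite (ahom0 ha) hcast0.
exfalso; apply: n2; apply: sig_Prop_eq; apply: (@sandwich_inj _ gw gx).
by rewrite -c1 /= sandwichM.
Qed.

End ConjComp.

Lemma conj_hom_comp r X Y W (gx gy gw : G) (U V T : {X | deg X = r})
  (eU : sval U = ob gx X) (eV eV' : sval V = ob gy Y) (eT : sval T = ob gw W)
  (g : cphom a Y W) (f : cphom a X Y) :
  conj_hom eU eT (cp_comp g f) = cp_comp (conj_hom eV' eT g) (conj_hom eU eV f).
Proof.
rewrite (Prop_irrelevance eV' eV); apply: cphom_ext => k.
rewrite conj_homE (cp_compE hA (ahom0 ha)) (cp_compE (summand_lincat _) (@restr_ahom0 _)).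
rewrite hcast_ahom_sum; last exact: (cp_term_support hA (ahom0 ha)).
rewrite -(fsbig_widen (@stab_lift r gx gy gw @` setT) setT) //; last first.
  by move=> p [_ np] /=; rewrite (cp_term_off_stab eU eV eT _ _ _ np) (ahom0 ha) hcast0.
rewrite fsbig_image; last by move=> q1 q2 _ _; apply: stab_lift_inj.
by apply: eq_fsbigr => q _; apply: cp_term_conj.
Qed.

Lemma aobjVK (g : G) Y : ob (g^-1)%g (ob g Y) = Y.
Proof. by rewrite -(aobjM a) /= mulVg (aobj1 a). Qed.

Lemma unconj_hom_obj r X (gx gy h : G) (U : {X | deg X = r}) :
  sval U = ob gx X -> ob (gy^-1)%g (ob (gy * h * gx^-1)%g (sval U)) = ob h X.
Proof. by move=> ->; rewrite -!(aobjM a) /= sandwichK. Qed.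

Section Unconj.
Variables (r : gpt Z) (X Y : lobj A) (gx gy : G) (U V : {X | deg X = r}).
Variables (eU : sval U = ob gx X) (eV : sval V = ob gy Y).

Definition unconj_fam (phi : cphom (Ar r) U V) (h : gcar (grpdata_of G)) : Hom (ob h X) Y :=
  match pselect (gact Z (gy * h * gx^-1)%g r = r) with
  | left s => hcast HC (unconj_hom_obj gy h eU)
      (etrans (f_equal (aobj a (gy^-1)%g) eV) (aobjVK gy Y))
      (act (gy^-1)%g (proj1_sig phi (exist _ (gy * h * gx^-1)%g s)))
  | right _ => 0 end.

Lemma unconj_fam_support phi : finite_set [set h | unconj_fam phi h != 0].
Proof.
pose conj h : G := (gy * h * gx^-1)%g.
apply: (sub_finite_set (B := conj @^-1` [set sval k | k in [set k | proj1_sig phi k != 0]])).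
  move=> h /=; rewrite /unconj_fam; case: pselect => [s|]; last by rewrite eqxx.
  case: (eqVneq (proj1_sig phi (exist _ (conj h) s)) 0) => [->|nz _].
    by rewrite (ahom0 ha) hcast0 eqxx.
  by exists (exist _ (conj h) s).
apply: finite_preimage; last by apply: finite_image; exact: (proj2_sig phi).
by move=> h1 h2 _ _; rewrite /conj -(invgK gy) -(invgK gx) => /sandwich_inj.
Qed.

Definition unconj_hom (phi : cphom (Ar r) U V) : cphom a X Y :=
  @mkcp _ _ _ a X Y (unconj_fam phi).

Lemma unconj_homE phi : proj1_sig (unconj_hom phi) = unconj_fam phi.
Proof. exact/mkcpE/unconj_fam_support. Qed.

Lemma conj_homK : cancel (conj_hom eU eV) unconj_hom.
Proof.
move=> f; apply: cphom_ext => h; rewrite unconj_homE /unconj_fam.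
case: pselect => [s|ns].
  apply: (@pack_inj _ A); rewrite pack_hcast conj_homE.
  rewrite (pack_ahom a _ (pack_hcast _ _ _)) -(pack_ahomM ha) /=.
  rewrite (pack_congr (fun k : G => act k _) (mulVg gy)) (pack_ahom1 ha).
  exact: (pack_congr (proj1_sig f) (sandwichK _ _ _)).
symmetry; apply: hsum => ed; apply: ns.
exact: stab_of_deg (deg_of_summand eU) (deg_of_summand eV) ed.
Qed.

Lemma unconj_homK : cancel unconj_hom (conj_hom eU eV).
Proof.
move=> phi; apply: cphom_ext => k; rewrite conj_homE unconj_homE /unconj_fam.
case: pselect => [s|ns]; last by exfalso; apply: ns; rewrite sandwichKV; exact: (proj2_sig k).
apply: (@pack_inj _ A); rewrite pack_hcast.
rewrite (pack_ahom a _ (pack_hcast _ _ _)) -(pack_ahomM ha) /=.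
rewrite (pack_congr (fun k : G => act k _) (mulgV gy)) (pack_ahom1 ha).
have ek : exist (fun g : G => gact Z g r = r) _ s = k.
  by apply: sig_Prop_eq; rewrite /= sandwichKV.
exact: (@pack_congr _ A _ (fun k : @stabT G Z r => ob (sval k) (sval U)) (fun=> sval V)
  (proj1_sig phi) _ _ ek).
Qed.

End Unconj.

Lemma conj_hom0 r X Y (gx gy : G) (U V : {X | deg X = r})
  (eU : sval U = ob gx X) (eV : sval V = ob gy Y) :
  conj_hom eU eV (cp_zero a X Y) = cp_zero (Ar r) U V.
Proof. by apply: cphom_ext => k; rewrite conj_homE /= (ahom0 ha) hcast0. Qed.

(** * The equivalence *)

Variable reps : gpt Z -> Prop.
Hypothesis hreps : forall z : gpt Z, exists! r, reps r /\ exists g : G, gact Z g z = r.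

Local Notation I := {r : gpt Z | reps r}.
Local Notation CC := (fun i : I => crossed (Ar (sval i))).
Local Notation D := (coprod CC).

Definition rep_witness (X : lobj A) := {p : I * G | gact Z p.2 (deg X) = sval p.1}.

Lemma rep_witness_ex X : exists p : I * G, gact Z p.2 (deg X) = sval p.1.
Proof. by have [r [[hr [g hg]] _]] := hreps (deg X); exists (exist _ r hr, g). Qed.

Definition choose_rep X : rep_witness X := cid (rep_witness_ex X).

Lemma rep_unique z (i j : I) (g h : G) :
  gact Z g z = sval i -> gact Z h z = sval j -> i = j.
Proof.
move=> hi hj; have [r [_ hu]] := hreps z.
apply: sig_Prop_eq; rewrite -(hu (sval i)) ?(hu (sval j)) //.
  by split; [exact: (proj2_sig j) | exists h].
by split; [exact: (proj2_sig i) | exists g].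
Qed.

Lemma deg_rep X (p : rep_witness X) : deg (ob (sval p).2 X) = sval (sval p).1.
Proof. by rewrite hdeg (proj2_sig p). Qed.

Definition F_obj X (p : rep_witness X) : cobj D :=
  existT _ (sval p).1 (exist _ (ob (sval p).2 X) (deg_rep p)).

Lemma sval_tr (i j : I) (e : i = j) (U : {X | deg X = sval i}) :
  sval (tr (C := CC) e U : {X | deg X = sval j}) = sval U.
Proof. by case: j / e. Qed.

Section Functor.
Variables (X Y : lobj A) (px : rep_witness X) (py : rep_witness Y).

Definition F_hom (f : cphom a X Y) : chom D (F_obj px) (F_obj py) :=
  fun e => conj_hom (sval_tr e (projT2 (F_obj px))) (erefl (sval (projT2 (F_obj py)))) f.

Definition F_hom_inv (phi : chom D (F_obj px) (F_obj py)) : cphom a X Y :=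
  match pselect ((sval px).1 = (sval py).1) with
  | left e => unconj_hom (sval_tr e (projT2 (F_obj px))) (erefl (sval (projT2 (F_obj py)))) (phi e)
  | right _ => cp_zero a X Y end.

Lemma cphom_cross_orbit (f : cphom a X Y) : (sval px).1 <> (sval py).1 -> f = cp_zero a X Y.
Proof.
move=> ne; apply: cphom_ext => h; apply: hsum => ed; apply: ne.
apply: (@rep_unique (deg X) _ _ (sval px).2 ((sval py).2 * h)%g (proj2_sig px)).
by rewrite gactM -hdeg ed (proj2_sig py).
Qed.

Lemma F_homD f g : F_hom (cp_add f g) = cadd D (F_hom f) (F_hom g).
Proof. by apply: functional_extensionality_dep => e; apply: conj_homD. Qed.

Lemma F_homZ c f : F_hom (cp_scale c f) = cscale D c (F_hom f).
Proof. by apply: functional_extensionality_dep => e; apply: conj_homZ. Qed.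

Lemma F_homK : cancel F_hom F_hom_inv.
Proof.
move=> f; rewrite /F_hom_inv; case: pselect => [e|ne]; first exact: conj_homK.
by rewrite (cphom_cross_orbit f ne).
Qed.

Lemma F_hom_invK : cancel F_hom_inv F_hom.
Proof.
move=> phi; apply: functional_extensionality_dep => e; rewrite /F_hom /F_hom_inv.
case: pselect => [e'|//]; rewrite (Prop_irrelevance e' e); exact: unconj_homK.
Qed.

End Functor.

Lemma F_hom1 X (px : rep_witness X) : F_hom (px := px) (py := px) (cp_id a X) = Defs.cid D (F_obj px).
Proof.
apply: functional_extensionality_dep => e.
rewrite (Prop_irrelevance e erefl) /= /cs_id /= scast_id.
exact: (conj_hom_id (sval_tr erefl (projT2 (F_obj px))) erefl).
Qed.

Lemma F_homM X Y W (px : rep_witness X) (py : rep_witness Y) (pw : rep_witness W)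
  (g : cphom a Y W) (f : cphom a X Y) :
  F_hom (px := px) (py := pw) (cp_comp g f) =
  ccomp D (F_hom (px := py) (py := pw) g) (F_hom (px := px) (py := py) f).
Proof.
move: px py pw f => [[i gx] hx] [[j gy] hy] [[l gw] hw] f.
apply: functional_extensionality_dep => /= e; subst l.
rewrite /ccomp /= /cs_comp /=; case: pselect => /= [e1|ne].
  by subst j; rewrite /= scast_id; apply: conj_hom_comp.
rewrite (@cphom_cross_orbit X Y (exist _ (i, gx) hx) (exist _ (j, gy) hy) f ne).
by rewrite (cp_comp0r hA (ahom0 ha)) /F_hom conj_hom0.
Qed.

Lemma F_obj_iso (i : I) (U : {X | deg X = sval i}) (p : rep_witness (sval U)) :
  exists (u : chom D (F_obj p) (existT _ i U)) (v : chom D (existT _ i U) (F_obj p)),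
  ccomp D u v = Defs.cid D (existT _ i U) /\ ccomp D v u = Defs.cid D (F_obj p).
Proof.
case: p => [[j gx] hx].
have eij : i = j by apply: (rep_unique (g := 1%g) _ hx); rewrite gact1 (proj2_sig U).
subst j.
have sx : gact Z gx (sval i) = sval i by rewrite -{1}(proj2_sig U) hx.
have sxV : gact Z (gx^-1)%g (sval i) = sval i by rewrite -{1}sx -gactM mulVg gact1.
pose s : gcar (stab Z (sval i)) := exist _ gx sx.
pose t : gcar (stab Z (sval i)) := exist _ (gx^-1)%g sxV.
have hts : gmul t s = gone (stab Z (sval i)) by apply: sig_Prop_eq; rewrite /= mulVg.
have hst : gmul s t = gone (stab Z (sval i)) by apply: sig_Prop_eq; rewrite /= mulgV.
have act_idm h V : ahom (Ar (sval i)) h (idm (summand deg (sval i)) V) =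
                   idm (summand deg (sval i)) (aobj (Ar (sval i)) h V).
  by case: ha => [[_ _ _ hid] _]; apply: hid.
have -> : F_obj (exist _ (i, gx) hx) = existT _ i (aobj (Ar (sval i)) s U).
  by congr existT; apply: sig_Prop_eq.
exists (cs_in (C := CC) (cp_unshift (Ar (sval i)) U hts)).
exists (cs_in (C := CC) (cp_shift (Ar (sval i)) s U)).
rewrite !cs_comp_in; split; congr cs_in.
  exact: (cp_unshiftK (summand_lincat _) (@restr_ahom0 _) act_idm).
exact: (cp_shiftK (summand_lincat _) (@restr_ahom0 _) act_idm).
Qed.

End OrbitDecomposition.
Arguments F_hom {R G Z A a deg hdeg reps X Y} px py f.
Arguments F_hom_inv {R G Z A a deg hdeg reps X Y} px py phi.

Unset Implicit Arguments.

Theorem lemma4p5 (R : comPzRingType) (G : groupType) (Z : gset G)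
  (A : lincat R) (a : lcaction (grpdata_of G) A) (deg : lobj A -> gpt Z)
  (hA : is_lincat A) (ha : is_lcaction a)
  (hsum : forall (X Y : lobj A) (f : lhom A X Y), deg X <> deg Y -> f = 0)
  (hdeg : forall (g : G) (X : lobj A), deg (aobj a g X) = gact Z g (deg X))
  (reps : gpt Z -> Prop)
  (hreps : forall z : gpt Z, exists! r, reps r /\ exists g : G, gact Z g z = r) :
  lcat_equiv (crossed a)
    (coprod (fun r : {r : gpt Z | reps r} =>
               crossed (restr_action hdeg (proj1_sig r)))).
Proof.
pose p := choose_rep deg hreps.
exists (fun X => F_obj hdeg (p X)), (fun X Y => F_hom (p X) (p Y)).
split; first split=> [X Y f g | X Y c f | X Y W g f | X | X Y].
- exact: F_homD.
- exact: F_homZ.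
- exact: F_homM.
- exact: F_hom1.
- by exists (F_hom_inv (p X) (p Y)) => f; [apply: F_homK | apply: F_hom_invK].
by case=> i U; exists (sval U); apply: F_obj_iso.
Qed.
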